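(* Let $\mu>\lambda$, $c\in\mathbb C^2\setminus\{0\}$ and $\eta_{PC}\in\mathbb C$. If $PC\,f_{c\,\nu,\mathbf p}=\eta_{PC}\,f_{c\,\nu,\mathbf p}$ for all $\mathbf p\in\mathbb R^3$, then $|\eta_{PC}|=1$ and $c$ is a null vector, $\langle c\cdot c\rangle=0$. In particular no $c$-basis (with $\langle c\cdot c\rangle=1$) consists of $PC$-invariant mode functions.
   Context: Fix $\omega>0$; work in the conformal chart $(t,\mathbf x)$, $t<0$, $\mathbf x\in\mathbb R^3$, of de Sitter spacetime. Let $\mu=m/\omega$ ($m$ the mass), $\lambda>0$ the coupling constant, $\mu>\lambda$, $\nu=\sqrt{\mu^2-\lambda^2}>0$. For $\mathbf p\in\mathbb R^3$, $p=|\mathbf p|$, let $u_{\nu,\mathbf p}(t,\mathbf x)=\sqrt{\pi/\omega}\,(2\sinh\pi\nu)^{-1/2}(2\pi)^{-3/2}(-\omega t)^{3/2}J_{i\nu}(-pt)\,e^{i\mathbf x\cdot\mathbf p}$ ($J_a$ the Bessel function of the first kind). On $\mathbb C^2$ use $\langle c\cdot c'\rangle=c_1^*c_1'-c_2^*c_2'$. For $c=(c_1,c_2)\in\mathbb C^2$ set $f_{c\,\nu,\mathbf p}=c_1u_{\nu,\mathbf p}+c_2u^*_{\nu,-\mathbf p}$. Operators: $(Pf)(t,\mathbf x)=f(t,-\mathbf x)$, $Cf=f^*$, and $PC=P\circ C$. *)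

From Stdlib Require Import Reals Lra ClassicalEpsilon Arith Factorial.
Open Scope R_scope.

Record Cplx : Type := mkC { Re : R ; Im : R }.

Definition RtoC (x : R) : Cplx := mkC x 0.
Definition C0 : Cplx := RtoC 0.
Definition C1 : Cplx := RtoC 1.
Definition Ci : Cplx := mkC 0 1.
Definition Cadd (z w : Cplx) : Cplx := mkC (Re z + Re w) (Im z + Im w).
Definition Copp (z : Cplx) : Cplx := mkC (- Re z) (- Im z).
Definition Csub (z w : Cplx) : Cplx := Cadd z (Copp w).
Definition Cmul (z w : Cplx) : Cplx :=
  mkC (Re z * Re w - Im z * Im w) (Re z * Im w + Im z * Re w).
Definition Cconj (z : Cplx) : Cplx := mkC (Re z) (- Im z).
Definition Cinv (z : Cplx) : Cplx :=
  let d := Re z * Re z + Im z * Im z in mkC (Re z / d) (- Im z / d).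
Definition Cdiv (z w : Cplx) : Cplx := Cmul z (Cinv w).
Definition Cmod (z : Cplx) : R := sqrt (Re z * Re z + Im z * Im z).
Definition Cexp (z : Cplx) : Cplx := mkC (exp (Re z) * cos (Im z)) (exp (Re z) * sin (Im z)).
Definition Cpow_pos (x : R) (z : Cplx) : Cplx := Cexp (Cmul z (RtoC (ln x))).

Definition Ccv (u : nat -> Cplx) (l : Cplx) : Prop :=
  Un_cv (fun n => Re (u n)) (Re l) /\ Un_cv (fun n => Im (u n)) (Im l).
(** the limit (when it exists; an arbitrary value otherwise) *)
Definition Clim (u : nat -> Cplx) : Cplx :=
  epsilon (inhabits C0) (fun l => Ccv u l).
Fixpoint Cpartial (a : nat -> Cplx) (n : nat) : Cplx :=
  match n with
  | O => a O
  | S k => Cadd (Cpartial a k) (a (S k))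
  end.
Definition Cseries (a : nat -> Cplx) : Cplx := Clim (Cpartial a).

Fixpoint Cprod_upto (f : nat -> Cplx) (n : nat) : Cplx :=
  match n with
  | O => C1
  | S k => Cmul (Cprod_upto f k) (f k)
  end.

(** Reciprocal Gamma function via Gauss' limit:
    1/Gamma(z) = lim_n z(z+1)...(z+n) / (n! n^z)  (entire, valid for all z) *)
Definition rGamma (z : Cplx) : Cplx :=
  Clim (fun n => Cdiv (Cprod_upto (fun j => Cadd z (RtoC (INR j))) (S n))
                      (Cmul (RtoC (INR (fact n))) (Cpow_pos (INR n) z))).

(** Bessel function of the first kind J_a(x), x > 0 real, a complex:
    J_a(x) = sum_k (-1)^k / (k! Gamma(k+a+1)) (x/2)^(2k+a) *)
Definition BesselJ (a : Cplx) (x : R) : Cplx :=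
  Cseries (fun k =>
    Cmul (RtoC ((-1) ^ k / INR (fact k)))
      (Cmul (rGamma (Cadd a (RtoC (INR k + 1))))
            (Cpow_pos (x / 2) (Cadd (RtoC (2 * INR k)) a)))).

Definition vec3 : Type := (R * R * R)%type.
Definition vdot (x p : vec3) : R :=
  match x, p with (x1, x2, x3), (p1, p2, p3) => x1 * p1 + x2 * p2 + x3 * p3 end.
Definition vnorm (p : vec3) : R := sqrt (vdot p p).
Definition vopp (p : vec3) : vec3 :=
  match p with (p1, p2, p3) => (- p1, - p2, - p3) end.

(** Functions on the conformal chart (t, x) *)
Definition field : Type := R -> vec3 -> Cplx.

(** nu = sqrt (mu^2 - lambda^2), mu = m / omega *)
Definition nu_of (omega m lambda : R) : R :=
  sqrt ((m / omega) ^ 2 - lambda ^ 2).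

Definition u_mode (omega nu : R) (p : vec3) : field := fun t x =>
  Cmul (RtoC (sqrt (PI / omega) * / sqrt (2 * sinh (PI * nu))
              * Rpower (2 * PI) (- (3 / 2)) * Rpower (- omega * t) (3 / 2)))
       (Cmul (BesselJ (mkC 0 nu) (- (vnorm p) * t))
             (Cexp (Cmul Ci (RtoC (vdot x p))))).

Definition fconj (f : field) : field := fun t x => Cconj (f t x).

Definition f_mode (omega nu : R) (c1 c2 : Cplx) (p : vec3) : field := fun t x =>
  Cadd (Cmul c1 (u_mode omega nu p t x))
       (Cmul c2 (fconj (u_mode omega nu (vopp p)) t x)).

Definition Pop (f : field) : field := fun t x => f t (vopp x).
Definition Cop (f : field) : field := fconj f.
Definition PCop (f : field) : field := Pop (Cop f).

Definition cform (c1 c2 d1 d2 : Cplx) : Cplx :=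
  Csub (Cmul (Cconj c1) d1) (Cmul (Cconj c2) d2).

From Stdlib Require Import Reals.
From Stdlib Require Import Lra Lia Psatz ClassicalEpsilon Factorial.
Open Scope R_scope.

(** Put [nu = sqrt (mu^2 - lambda^2) > 0].  Evaluating the invariance
    [PC f = eta f] at [t = -1], [x = 0] and momentum [p = (y,0,0)] yields,
    with [J(y) = J_{i nu}(y)],
        (conj c2 - eta c1) J(y) = (eta c2 - conj c1) conj (J(y))      (for y > 0).
    An identity [a w = b conj w] holding for two values [w1], [w2] with
    [Im (conj w1 * w2) <> 0] forces [a = b = 0]; hence [conj c2 = eta c1] and
    [eta c2 = conj c1], from which [|eta| = 1] and [|c1| = |c2|] follow.

    The analytic core is therefore to find two such values of [J].  For small
    [y = 2 e^l] the series gives [J(y) = e^{i nu l} S(l)] with [S(l)] close to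
    [1/Gamma(1 + i nu)], which is nonzero; moving [l] by [pi/(2 nu)] turns the
    phase by a quarter turn while [S] stays close to the same nonzero number. *)

Lemma Ceq (z w : Cplx) : Re z = Re w -> Im z = Im w -> z = w.
Proof. destruct z, w; simpl; intros -> ->; reflexivity. Qed.

(** Squared modulus; it is multiplicative and avoids square roots. *)
Definition Nm (z : Cplx) : R := Re z * Re z + Im z * Im z.

Lemma Nm_mul z w : Nm (Cmul z w) = Nm z * Nm w.
Proof. unfold Nm, Cmul; simpl; ring. Qed.

Lemma Nm_conj z : Nm (Cconj z) = Nm z.
Proof. unfold Nm, Cconj; simpl; ring. Qed.

Lemma Nm_ge0 z : 0 <= Nm z.
Proof. unfold Nm; nra. Qed.

Lemma Nm_eq0 z : Nm z = 0 -> z = C0.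
Proof. unfold Nm; intro H; apply Ceq; simpl; nra. Qed.

Lemma Cmul_comm z w : Cmul z w = Cmul w z.
Proof. apply Ceq; unfold Cmul; simpl; ring. Qed.

Lemma Cmul_assoc z w v : Cmul (Cmul z w) v = Cmul z (Cmul w v).
Proof. apply Ceq; unfold Cmul; simpl; ring. Qed.

Definition polar (r th : R) : Cplx := mkC (r * cos th) (r * sin th).

Lemma polar_mul r1 t1 r2 t2 : Cmul (polar r1 t1) (polar r2 t2) = polar (r1 * r2) (t1 + t2).
Proof. unfold polar, Cmul; apply Ceq; simpl; rewrite ?cos_plus, ?sin_plus; ring. Qed.

Lemma Nm_polar r t : Nm (polar r t) = r * r.
Proof.
  unfold Nm, polar; simpl. pose proof (sin2_cos2 t) as H. unfold Rsqr in H.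
  transitivity (r * r * (sin t * sin t + cos t * cos t)); [ring|]. rewrite H; ring.
Qed.

Lemma Cdiv_eq P D h : Nm D <> 0 -> Cmul h D = P -> Cdiv P D = h.
Proof.
  intros HD <-. unfold Nm in HD. destruct h as [a b], D as [c d]; simpl in *.
  unfold Cdiv, Cinv, Cmul; simpl. apply Ceq; simpl; field; auto.
Qed.

Lemma cv_const c : Un_cv (fun _ => c) c.
Proof. intros e He; exists 0%nat; intros; unfold Rdist; rewrite Rminus_diag, Rabs_R0; lra. Qed.

Lemma Un_cv_tail u l k : Un_cv u l -> Un_cv (fun m => u (k + m)%nat) l.
Proof. intros H e He; destruct (H e He) as [N HN]; exists N; intros n Hn; apply HN; lia. Qed.

Lemma Un_cv_from_tail u l : Un_cv (fun n => u (S n)) l -> Un_cv u l.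
Proof.
  intro H; apply (CV_shift u 1); apply (Un_cv_ext (fun n => u (S n))); auto.
  intro n; rewrite Nat.add_1_r; reflexivity.
Qed.

Lemma cv_inv_n C : Un_cv (fun n => C / INR (S n)) 0.
Proof.
  replace 0 with (C * 0) by ring.
  apply (CV_mult (fun _ => C)); [apply cv_const|].
  apply (cv_infty_cv_0 (fun n => INR (S n))).
  intro M. destruct (INR_unbounded M) as [N HN]. exists N; intros n Hn.
  apply Rlt_le_trans with (1 := HN). apply le_INR; lia.
Qed.

Lemma cv_pow q : 0 <= q < 1 -> Un_cv (fun n => q ^ n) 0.
Proof.
  intros Hq e He. destruct (pow_lt_1_zero q ltac:(rewrite Rabs_right; lra) e He) as [N HN].
  exists N; intros n Hn. unfold Rdist. rewrite Rminus_0_r. auto.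
Qed.

Lemma dominated_increments (u v : nat -> R) :
  (forall n, Rabs (u (S n) - u n) <= v n - v (S n)) ->
  forall n k, Rabs (u (n + k)%nat - u n) <= v n - v (n + k)%nat.
Proof.
  intros H n k; induction k as [|k IH].
  - rewrite Nat.add_0_r, Rminus_diag, Rabs_R0; lra.
  - replace (n + S k)%nat with (S (n + k)) by lia.
    pose proof (H (n + k)%nat) as Hk.
    pose proof (Rabs_triang (u (S (n + k)) - u (n + k)%nat) (u (n + k)%nat - u n)) as T.
    replace (u (S (n + k)) - u (n + k)%nat + (u (n + k)%nat - u n))
      with (u (S (n + k)) - u n) in T by ring.
    lra.
Qed.

Lemma cv_dominated (u v : nat -> R) lv : Un_cv v lv ->
  (forall n, Rabs (u (S n) - u n) <= v n - v (S n)) ->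
  { l | Un_cv u l /\ forall n, Rabs (l - u n) <= v n - lv }.
Proof.
  intros Hv H.
  assert (Hc : Cauchy_crit u).
  { intros e He. destruct (CV_Cauchy v (exist _ lv Hv) e He) as [N HN].
    exists N; intros n m Hn Hm. unfold Rdist in *.
    destruct (Nat.le_ge_cases n m) as [Hnm|Hnm].
    - replace m with (n + (m - n))%nat by lia.
      pose proof (dominated_increments u v H n (m - n)) as D.
      specialize (HN n (n + (m - n))%nat Hn ltac:(lia)).
      rewrite Rabs_minus_sym. apply Rle_lt_trans with (1 := D).
      apply Rle_lt_trans with (2 := HN). apply RRle_abs.
    - replace n with (m + (n - m))%nat by lia.
      pose proof (dominated_increments u v H m (n - m)) as D.
      specialize (HN m (m + (n - m))%nat Hm ltac:(lia)).
      apply Rle_lt_trans with (1 := D).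
      apply Rle_lt_trans with (2 := HN). apply RRle_abs. }
  destruct (R_complete u Hc) as [l Hl]. exists l; split; auto.
  intro n.
  apply (@Rle_cv_lim (fun k => Rabs (u (n + k)%nat - u n)) (fun k => v n - v (n + k)%nat)).
  - intro k; apply dominated_increments; auto.
  - apply (continuity_seq Rabs (fun k => u (n + k)%nat - u n)).
    + apply Rcontinuity_abs.
    + apply CV_minus; [apply Un_cv_tail; auto | apply cv_const].
  - apply CV_minus; [apply cv_const | apply Un_cv_tail; auto].
Qed.

Lemma cv_harmonic_telescope (u : nat -> R) C :
  (forall n, Rabs (u (S n) - u n) <= C * (/ INR (S n) - / INR (S (S n)))) ->
  { l | Un_cv u l }.
Proof.
  intro H. destruct (cv_dominated u (fun n => C / INR (S n)) 0 (cv_inv_n C)) as [l [Hl _]].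
  - intro n; unfold Rdiv; rewrite <- Rmult_minus_distr_l; auto.
  - exists l; auto.
Qed.

Lemma Ccv_unique u l1 l2 : Ccv u l1 -> Ccv u l2 -> l1 = l2.
Proof. intros [H1 H2] [H3 H4]; apply Ceq; eapply UL_sequence; eauto. Qed.

Lemma Clim_eq u l : Ccv u l -> Clim u = l.
Proof.
  intro H. unfold Clim.
  assert (Hex : exists l, Ccv u l) by (exists l; exact H).
  eapply Ccv_unique; [apply (epsilon_spec (inhabits C0) (fun l => Ccv u l) Hex) | exact H].
Qed.

Lemma Ccv_const c : Ccv (fun _ => c) c.
Proof. split; apply cv_const. Qed.

Lemma Ccv_mul u v lu lv : Ccv u lu -> Ccv v lv ->
  Ccv (fun n => Cmul (u n) (v n)) (Cmul lu lv).
Proof.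
  intros [H1 H2] [H3 H4]; split; simpl.
  - apply CV_minus; apply CV_mult; auto.
  - apply CV_plus; apply CV_mult; auto.
Qed.

Lemma Ccv_ext u v l : (forall n, u n = v n) -> Ccv u l -> Ccv v l.
Proof.
  intros He [H1 H2]; split;
  [apply (Un_cv_ext (fun n => Re (u n))) | apply (Un_cv_ext (fun n => Im (u n)))];
  auto; intro n; rewrite He; reflexivity.
Qed.

Lemma Ccv_from_tail u l : Ccv (fun n => u (S n)) l -> Ccv u l.
Proof. intros [H1 H2]; split; apply (Un_cv_from_tail (fun n => _ (u n))); auto. Qed.

Lemma Ccv_tail u l : Ccv u l -> Ccv (fun n => u (S n)) l.
Proof.
  intros [H1 H2]; split;
  [apply (Un_cv_tail (fun n => Re (u n)) _ 1) | apply (Un_cv_tail (fun n => Im (u n)) _ 1)]; auto.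
Qed.

Lemma Ccv_polar r th lr lth : Un_cv r lr -> Un_cv th lth ->
  Ccv (fun n => polar (r n) (th n)) (polar lr lth).
Proof.
  intros Hr Ht; split; simpl; apply CV_mult; auto;
  apply (continuity_seq _ th); auto; [apply continuity_cos | apply continuity_sin].
Qed.

Lemma ln_le_compat x y : 0 < x -> x <= y -> ln x <= ln y.
Proof.
  intros Hx Hxy; destruct (Req_dec x y) as [->|Hne]; [lra|].
  left; apply ln_increasing; lra.
Qed.

Lemma ln_le_sub1 y : 0 < y -> ln y <= y - 1.
Proof.
  intro Hy. pose proof (exp_ineq1_le (y - 1)).
  rewrite <- (ln_exp (y - 1)). apply ln_le_compat; auto. lra.
Qed.

Lemma ln_modulus_bounds a : 0 <= ln (sqrt (1 + a ^ 2)) <= a ^ 2 / 2.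
Proof.
  pose proof (pow2_ge_0 a) as Ha.
  assert (H1 : 1 <= sqrt (1 + a ^ 2)).
  { rewrite <- sqrt_1 at 1. apply sqrt_le_1_alt. lra. }
  assert (H2 : sqrt (1 + a ^ 2) <= 1 + a ^ 2 / 2).
  { rewrite <- (sqrt_square (1 + a ^ 2 / 2)) by nra. apply sqrt_le_1_alt. nra. }
  split.
  - rewrite <- ln_1. apply ln_le_compat; lra.
  - pose proof (ln_le_sub1 (sqrt (1 + a ^ 2)) ltac:(lra)). lra.
Qed.

Lemma atan_error y : 0 < y -> 0 <= y - atan y <= y ^ 3.
Proof.
  intro Hy.
  destruct (MVT_cor2 atan (fun x => / (1 + x ^ 2)) 0 y Hy) as [c [Hc Hc2]].
  { intros; apply derivable_pt_lim_atan. }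
  rewrite atan_0, !Rminus_0_r in Hc.
  assert (Hinv : / (1 + c ^ 2) <= 1).
  { rewrite <- Rinv_1. apply Rinv_le_contravar; [lra|]. nra. }
  assert (Hlow : / (1 + y ^ 2) <= / (1 + c ^ 2)) by (apply Rinv_le_contravar; nra).
  assert (E : y - y * / (1 + y ^ 2) = y ^ 3 * / (1 + y ^ 2)) by (field; nra).
  assert (Hy3 : 0 < y ^ 3) by (apply pow_lt; lra).
  assert (Hq : / (1 + y ^ 2) <= 1).
  { rewrite <- Rinv_1. apply Rinv_le_contravar; [lra|]. nra. }
  rewrite Hc. split; nra.
Qed.

Lemma ln_diff_bounds m : 0 < m -> / (m + 1) <= ln (m + 1) - ln m <= / m.
Proof.
  intro Hm.
  destruct (MVT_cor2 ln Rinv m (m + 1) ltac:(lra)) as [c [Hc Hc2]].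
  { intros; apply derivable_pt_lim_ln; lra. }
  rewrite Hc. replace (m + 1 - m) with 1 by ring. rewrite Rmult_1_r.
  split; apply Rinv_le_contravar; lra.
Qed.

(** Smallness of the expansion parameter [e^{2l}] used for the Bessel series. *)
Lemma exp_small l : l <= -2 -> exp (2 * l) <= 1 / 9.
Proof.
  intro Hl. pose proof (exp_ineq1_le 2).
  assert (H4 : exp 4 = exp 2 * exp 2) by (rewrite <- exp_plus; f_equal; ring).
  assert (exp (2 * l) <= exp (-4)).
  { destruct (Req_dec (2 * l) (-4)) as [->|]; [lra|]. left; apply exp_increasing; lra. }
  assert (Hm : exp (-4) * exp 4 = 1)
    by (rewrite <- exp_plus; replace (-4 + 4) with 0 by ring; apply exp_0).
  assert (9 <= exp 4) by nra.
  pose proof (exp_pos (-4)). nra.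
Qed.

(** ** Gauss' product for the reciprocal Gamma function *)

Definition gauss (z : Cplx) (n : nat) : Cplx :=
  Cdiv (Cprod_upto (fun j => Cadd z (RtoC (INR j))) (S n))
       (Cmul (RtoC (INR (fact n))) (Cpow_pos (INR n) z)).

Lemma rGamma_gauss z : rGamma z = Clim (gauss z).
Proof. reflexivity. Qed.

Lemma INR_fact_pos n : 0 < INR (fact n).
Proof. apply lt_0_INR, lt_O_fact. Qed.

Fixpoint sum_below (f : nat -> R) (k : nat) : R :=
  match k with O => 0 | S k => sum_below f k + f k end.

Definition log_mod_sum (nu : R) (k : nat) : R :=
  sum_below (fun j => ln (sqrt (1 + (nu / (INR j + 1)) ^ 2))) k.
Definition arg_sum (nu : R) (k : nat) : R :=
  sum_below (fun j => atan (nu / (INR j + 1))) k.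

Lemma polar_form m nu : 0 < m ->
  mkC m nu = polar (m * exp (ln (sqrt (1 + (nu / m) ^ 2)))) (atan (nu / m)).
Proof.
  intro Hm. unfold polar.
  assert (Hs : 0 < sqrt (1 + (nu / m) ^ 2))
    by (pose proof (pow2_ge_0 (nu / m)); apply sqrt_lt_R0; lra).
  rewrite exp_ln by exact Hs. rewrite cos_atan, sin_atan. unfold Rsqr.
  replace ((nu / m) * (nu / m)) with ((nu / m) ^ 2) by ring.
  set (s := sqrt (1 + (nu / m) ^ 2)) in *.
  apply Ceq; simpl; field; lra.
Qed.

Lemma rising_product_polar nu k :
  Cprod_upto (fun j => Cadd (mkC 1 nu) (RtoC (INR j))) k
  = polar (INR (fact k) * exp (log_mod_sum nu k)) (arg_sum nu k).
Proof.
  induction k as [|k IH].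
  - unfold polar, log_mod_sum, arg_sum; simpl. rewrite exp_0, cos_0, sin_0.
    apply Ceq; simpl; ring.
  - simpl Cprod_upto. rewrite IH.
    replace (Cadd (mkC 1 nu) (RtoC (INR k))) with (mkC (INR k + 1) nu)
      by (apply Ceq; simpl; ring).
    rewrite (polar_form (INR k + 1) nu) by (pose proof (pos_INR k); lra).
    rewrite polar_mul. unfold log_mod_sum, arg_sum; cbn [sum_below].
    f_equal. rewrite exp_plus, fact_simpl, mult_INR, S_INR. ring.
Qed.

Lemma gauss_polar nu n : 0 < INR n ->
  gauss (mkC 1 nu) n =
  polar (INR (fact (S n)) * exp (log_mod_sum nu (S n)) / (INR (fact n) * INR n))
        (arg_sum nu (S n) - nu * ln (INR n)).
Proof.
  intro Hn. pose proof (INR_fact_pos n).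
  assert (Hden : Cmul (RtoC (INR (fact n))) (Cpow_pos (INR n) (mkC 1 nu))
                 = polar (INR (fact n) * INR n) (nu * ln (INR n))).
  { unfold Cpow_pos, Cexp, Cmul, RtoC, polar; simpl.
    replace (1 * ln (INR n) - nu * 0) with (ln (INR n)) by ring.
    replace (1 * 0 + nu * ln (INR n)) with (nu * ln (INR n)) by ring.
    rewrite exp_ln by auto. apply Ceq; simpl; ring. }
  unfold gauss. rewrite rising_product_polar, Hden.
  apply Cdiv_eq.
  - rewrite Nm_polar. apply Rmult_integral_contrapositive; split; nra.
  - rewrite polar_mul. f_equal; [field; lra | ring].
Qed.

(** The logarithmic moduli converge: the [j]-th term is [O(nu^2/j^2)]. *)
Lemma log_mod_sum_cv nu : {L | Un_cv (log_mod_sum nu) L}.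
Proof.
  apply (cv_harmonic_telescope _ (nu ^ 2)). intro n.
  replace (log_mod_sum nu (S n) - log_mod_sum nu n)
    with (ln (sqrt (1 + (nu / (INR n + 1)) ^ 2)))
    by (unfold log_mod_sum; cbn [sum_below]; ring).
  destruct (ln_modulus_bounds (nu / (INR n + 1))) as [H1 H2].
  rewrite Rabs_right by lra.
  rewrite !S_INR. pose proof (pos_INR n).
  apply Rle_trans with (1 := H2).
  replace ((nu / (INR n + 1)) ^ 2 / 2)
    with (nu ^ 2 * (/ (2 * (INR n + 1) * (INR n + 1)))) by (field; lra).
  replace (/ (INR n + 1) - / (INR n + 1 + 1)) with (/ ((INR n + 1) * (INR n + 2)))
    by (field; lra).
  apply Rmult_le_compat_l; [apply pow2_ge_0|]. apply Rinv_le_contravar; nra.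
Qed.

(** One step of the argument sequence: [atan (nu/(m+2))] against
    [nu (ln (m+1) - ln m)], both close to [nu/m]. *)
Lemma arg_step_bound nu m d aT : 0 < nu -> 1 <= m ->
  / (m + 1) <= d <= / m ->
  nu / (m + 2) - (nu / (m + 2)) ^ 3 <= aT <= nu / (m + 2) ->
  Rabs (aT - nu * d) <= (2 * nu + nu ^ 3) * (/ m - / (m + 1)).
Proof.
  intros Hnu Hm Hd Hat.
  assert (E1 : nu / m - nu / (m + 2) = 2 * nu * / (m * (m + 2))) by (field; lra).
  assert (E2 : / m - / (m + 1) = / (m * (m + 1))) by (field; lra).
  assert (I1 : / (m * (m + 2)) <= / (m * (m + 1))) by (apply Rinv_le_contravar; nra).
  assert (E3 : (nu / (m + 2)) ^ 3 = nu ^ 3 * / ((m + 2) ^ 3)) by (field; lra).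
  assert (I2 : / ((m + 2) ^ 3) <= / (m * (m + 1))) by (apply Rinv_le_contravar; nra).
  assert (I3 : nu / (m + 2) <= nu / (m + 1)).
  { unfold Rdiv; apply Rmult_le_compat_l; [lra|]; apply Rinv_le_contravar; lra. }
  assert (Hnd1 : nu * / (m + 1) <= nu * d) by (apply Rmult_le_compat_l; lra).
  assert (Hnd2 : nu * d <= nu * / m) by (apply Rmult_le_compat_l; lra).
  assert (J1 : 2 * nu * / (m * (m + 2)) <= 2 * nu * / (m * (m + 1)))
    by (apply Rmult_le_compat_l; lra).
  assert (J2 : nu ^ 3 * / ((m + 2) ^ 3) <= nu ^ 3 * / (m * (m + 1))).
  { apply Rmult_le_compat_l; [apply pow_le; lra | lra]. }
  rewrite E2. unfold Rdiv in *.
  apply Rabs_le; split; nra.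
Qed.

(** The argument of [gauss (1 + i nu) (S n)], up to a multiple of [2 pi]. *)
Definition gauss_arg (nu : R) (n : nat) : R :=
  arg_sum nu (S (S n)) - nu * ln (INR (S n)).

Lemma gauss_arg_cv nu : 0 < nu -> {T | Un_cv (gauss_arg nu) T}.
Proof.
  intro Hnu. apply (cv_harmonic_telescope _ (2 * nu + nu ^ 3)). intro n.
  set (m := INR (S n)).
  assert (Hm : 1 <= m) by (unfold m; rewrite S_INR; pose proof (pos_INR n); lra).
  replace (gauss_arg nu (S n) - gauss_arg nu n)
    with (atan (nu / (m + 2)) - nu * (ln (m + 1) - ln m)).
  2:{ unfold gauss_arg, arg_sum, m; cbn [sum_below]. rewrite !S_INR. ring_simplify.
      replace (INR n + 1 + 1 + 1) with (INR n + 1 + 2) by ring. ring. }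
  replace (INR (S (S n))) with (m + 1) by (unfold m; rewrite !S_INR; ring).
  apply arg_step_bound; auto.
  - apply ln_diff_bounds; lra.
  - assert (0 < nu / (m + 2)) by (apply Rdiv_lt_0_compat; lra).
    destruct (atan_error _ H); lra.
Qed.

Lemma gauss_cv_at_one nu : 0 < nu -> { G | Ccv (gauss (mkC 1 nu)) G /\ 0 < Nm G }.
Proof.
  intro Hnu. destruct (log_mod_sum_cv nu) as [L HL]. destruct (gauss_arg_cv nu Hnu) as [T HT].
  exists (polar ((1 + 0) * exp L) T). split.
  2:{ rewrite Nm_polar. pose proof (exp_pos L). nra. }
  apply Ccv_from_tail.
  apply (Ccv_ext (fun n => polar ((1 + 1 / INR (S n)) * exp (log_mod_sum nu (S (S n))))
                                 (gauss_arg nu n))).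
  - intro n. rewrite gauss_polar by (apply lt_0_INR; lia).
    unfold polar, gauss_arg. pose proof (INR_fact_pos (S n)).
    assert (0 < INR (S n)) by (apply lt_0_INR; lia).
    f_equal; f_equal; rewrite (fact_simpl (S n)), mult_INR, (S_INR (S n)); field; lra.
  - apply Ccv_polar; auto.
    apply CV_mult.
    + apply CV_plus; [apply cv_const | apply cv_inv_n].
    + apply (continuity_seq exp (fun n => log_mod_sum nu (S (S n)))).
      * apply derivable_continuous_pt, derivable_pt_exp.
      * apply (Un_cv_tail (log_mod_sum nu) L 2); auto.
Qed.

Lemma rising_product_shift a b k :
  Cmul (Cprod_upto (fun j => Cadd (mkC (a + 1) b) (RtoC (INR j))) k) (mkC a b)
  = Cmul (Cprod_upto (fun j => Cadd (mkC a b) (RtoC (INR j))) k) (mkC (a + INR k) b).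
Proof.
  induction k as [|k IH].
  - simpl. apply Ceq; unfold Cmul, C1, RtoC; simpl; ring.
  - simpl Cprod_upto.
    rewrite Cmul_assoc, (Cmul_comm _ (mkC a b)), <- Cmul_assoc, IH.
    rewrite !Cmul_assoc. f_equal. rewrite S_INR.
    apply Ceq; unfold Cmul, Cadd, RtoC; simpl; ring.
Qed.

Lemma Cpow_pos_shift a b x : 0 < x ->
  Cpow_pos x (mkC (a + 1) b) = Cmul (RtoC x) (Cpow_pos x (mkC a b)).
Proof.
  intro Hx. unfold Cpow_pos, Cexp, Cmul, RtoC; simpl.
  replace ((a + 1) * ln x - b * 0) with (ln x + (a * ln x - b * 0)) by ring.
  replace ((a + 1) * 0 + b * ln x) with (a * 0 + b * ln x) by ring.
  rewrite exp_plus, exp_ln by auto. apply Ceq; simpl; ring.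
Qed.

Lemma Nm_Cpow_pos_pos x z : 0 < Nm (Cpow_pos x z).
Proof.
  unfold Cpow_pos, Cexp, Nm; simpl.
  set (e := exp _). set (t := _ * 0 + _). assert (He : 0 < e) by apply exp_pos.
  pose proof (sin2_cos2 t) as H. unfold Rsqr in H.
  replace (e * cos t * (e * cos t) + e * sin t * (e * sin t))
    with (e * e * (sin t * sin t + cos t * cos t)) by ring.
  rewrite H. nra.
Qed.

Lemma Cdiv_scale P D w n : Nm D <> 0 -> n <> 0 ->
  Cdiv (Cmul P w) (Cmul (RtoC n) D) = Cmul (Cdiv P D) (mkC (Re w / n) (Im w / n)).
Proof.
  intros HD Hn. unfold Nm in HD. destruct P as [p q], D as [c d], w as [u v].
  unfold Cdiv, Cinv, Cmul, RtoC; simpl in *.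
  assert (n * c * (n * c) + n * d * (n * d) <> 0).
  { replace (n * c * (n * c) + n * d * (n * d)) with ((n * n) * (c * c + d * d)) by ring.
    apply Rmult_integral_contrapositive; split; auto. }
  apply Ceq; simpl; field; auto.
Qed.

Lemma gauss_shift a b n : 0 < INR n ->
  Cmul (gauss (mkC (a + 1) b) n) (mkC a b)
  = Cmul (gauss (mkC a b) n) (mkC ((a + INR (S n)) / INR n) (b / INR n)).
Proof.
  intro Hn. unfold gauss.
  pose proof (rising_product_shift a b (S n)) as HP.
  set (P' := Cprod_upto _ (S n)) in *.
  set (P := Cprod_upto (fun j => Cadd (mkC a b) _) (S n)) in *.
  rewrite Cpow_pos_shift by auto.
  set (D := Cmul (RtoC (INR (fact n))) (Cpow_pos (INR n) (mkC a b))).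
  replace (Cmul (RtoC (INR (fact n))) (Cmul (RtoC (INR n)) (Cpow_pos (INR n) (mkC a b))))
    with (Cmul (RtoC (INR n)) D) by (unfold D; apply Ceq; unfold Cmul, RtoC; simpl; ring).
  assert (HD : Nm D <> 0).
  { unfold D. rewrite Nm_mul. apply Rgt_not_eq, Rmult_lt_0_compat.
    - pose proof (INR_fact_pos n). unfold Nm; simpl; nra.
    - apply Nm_Cpow_pos_pos. }
  transitivity (Cdiv (Cmul P' (mkC a b)) (Cmul (RtoC (INR n)) D)).
  { unfold Cdiv. rewrite !Cmul_assoc. f_equal. apply Cmul_comm. }
  rewrite HP, Cdiv_scale by lra. reflexivity.
Qed.

Lemma gauss_functional_equation a b R : 0 < Nm (mkC a b) -> Ccv (gauss (mkC a b)) R ->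
  exists R', Ccv (gauss (mkC (a + 1) b)) R' /\ Cmul R' (mkC a b) = R.
Proof.
  intros Hz HR. set (z := mkC a b). set (Z := Cinv z).
  assert (HzZ : forall u, Cmul (Cmul u z) Z = u).
  { intro u. unfold Nm in Hz; simpl in Hz. unfold Z, z, Cinv, Cmul; destruct u as [p q]; simpl.
    apply Ceq; simpl; field; lra. }
  exists (Cmul (Cmul R (mkC (1 + 0) 0)) Z). split.
  - apply Ccv_from_tail.
    apply (Ccv_ext (fun n => Cmul (Cmul (gauss z (S n))
              (mkC ((a + INR (S (S n))) / INR (S n)) (b / INR (S n)))) Z)).
    + intro n. rewrite <- (HzZ (gauss (mkC (a + 1) b) (S n))).
      unfold z. rewrite gauss_shift by (apply lt_0_INR; lia). reflexivity.
    + apply Ccv_mul; [|apply Ccv_const]. apply Ccv_mul; [apply Ccv_tail; auto|].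
      split; cbn [Re Im].
      * apply (Un_cv_ext (fun n => 1 + (a + 1) / INR (S n))).
        { intro n. rewrite (S_INR (S n)). assert (0 < INR (S n)) by (apply lt_0_INR; lia).
          field; lra. }
        apply CV_plus; [apply cv_const | apply cv_inv_n].
      * apply cv_inv_n.
  - unfold Nm in Hz; simpl in Hz. destruct R as [p q]; unfold Z, z, Cinv, Cmul; simpl.
    apply Ceq; simpl; field; lra.
Qed.

(** [1/Gamma] exists at every [k + 1 + i nu] and its modulus there is at most
    [|1/Gamma(1 + i nu)|], since [|k + i nu| >= 1]. *)
Lemma gauss_bounded_on_shifts nu : 0 < nu -> exists G, 0 < Nm G /\ Ccv (gauss (mkC 1 nu)) G /\
  forall k, exists Rk, Ccv (gauss (mkC (INR k + 1) nu)) Rk /\ Nm Rk <= Nm G.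
Proof.
  intro Hnu. destruct (gauss_cv_at_one nu Hnu) as [G [HG HN]].
  exists G; split; auto; split; auto.
  induction k as [|k IH].
  - exists G; split; [|lra]. simpl INR. rewrite Rplus_0_l. auto.
  - destruct IH as [Rk [Hc Hle]].
    assert (Hz : 1 <= Nm (mkC (INR k + 1) nu)) by (unfold Nm; simpl; pose proof (pos_INR k); nra).
    destruct (gauss_functional_equation (INR k + 1) nu Rk) as [R' [H1 H2]]; [lra | auto |].
    exists R'. rewrite S_INR. split; auto.
    assert (Nm R' * Nm (mkC (INR k + 1) nu) = Nm Rk) by (rewrite <- H2, Nm_mul; auto).
    pose proof (Nm_ge0 R'). nra.
Qed.

(** ** The Bessel function at small argument *)

Lemma abs_of_sq x y : 0 <= y -> x * x <= y * y -> Rabs x <= y.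
Proof.
  intros Hy H. rewrite <- (Rabs_right y) by lra. apply Rsqr_le_abs_0. unfold Rsqr; auto.
Qed.

Lemma geometric_series_near_first_term (a : nat -> Cplx) M q : 0 <= M -> 0 <= q < 1 ->
  (forall k, Nm (a k) <= (M * q ^ k) * (M * q ^ k)) ->
  exists L, Ccv (Cpartial a) L /\ Rabs (Re L - Re (a 0%nat)) <= M * q / (1 - q)
                           /\ Rabs (Im L - Im (a 0%nat)) <= M * q / (1 - q).
Proof.
  intros HM Hq Ha.
  set (v := fun n => M * q ^ (S n) / (1 - q)).
  assert (Hv : Un_cv v 0).
  { apply (Un_cv_ext (fun n => (M * q / (1 - q)) * q ^ n)).
    { intro n; unfold v; simpl; field; lra. }
    replace 0 with ((M * q / (1 - q)) * 0) by ring.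
    apply CV_mult; [apply cv_const | apply cv_pow; auto]. }
  assert (Hstep : forall n, M * q ^ (S n) = v n - v (S n)).
  { intro n. unfold v. simpl. field. lra. }
  assert (HMq : forall k, 0 <= M * q ^ k) by (intro k; apply Rmult_le_pos; auto; apply pow_le; lra).
  assert (Hcoord : forall k, Rabs (Re (a k)) <= M * q ^ k /\ Rabs (Im (a k)) <= M * q ^ k).
  { intro k. specialize (Ha k). unfold Nm in Ha.
    pose proof (Rle_0_sqr (Re (a k))). pose proof (Rle_0_sqr (Im (a k))). unfold Rsqr in *.
    split; apply abs_of_sq; auto; lra. }
  destruct (cv_dominated (fun n => Re (Cpartial a n)) v 0 Hv) as [l1 [H1 B1]].
  { intro n. cbn [Cpartial Re Cadd]. rewrite <- Hstep.
    replace (Re (Cpartial a n) + Re (a (S n)) - Re (Cpartial a n)) with (Re (a (S n))) by ring.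
    apply Hcoord. }
  destruct (cv_dominated (fun n => Im (Cpartial a n)) v 0 Hv) as [l2 [H2 B2]].
  { intro n. cbn [Cpartial Im Cadd]. rewrite <- Hstep.
    replace (Im (Cpartial a n) + Im (a (S n)) - Im (Cpartial a n)) with (Im (a (S n))) by ring.
    apply Hcoord. }
  exists (mkC l1 l2). split; [split; auto|].
  specialize (B1 0%nat); specialize (B2 0%nat). unfold v in B1, B2. simpl in B1, B2.
  cbn [Re Im]. rewrite Rmult_1_r, Rminus_0_r in B1, B2. auto.
Qed.

(** At [x = 2 e^l] the [k]-th Bessel term is [e^{i nu l}] times [bessel_term nu l k]. *)
Definition bessel_term (nu l : R) (k : nat) : Cplx :=
  Cmul (RtoC ((-1) ^ k / INR (fact k) * exp (2 * l) ^ k)) (rGamma (mkC (INR k + 1) nu)).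

Definition phase (nu l : R) : Cplx := mkC (cos (nu * l)) (sin (nu * l)).

Lemma Nm_phase nu l : Nm (phase nu l) = 1.
Proof. unfold Nm, phase; simpl. pose proof (sin2_cos2 (nu * l)) as H. unfold Rsqr in H. lra. Qed.

Lemma phase_quarter_turn nu l : 0 < nu -> phase nu (l + PI / (2 * nu)) = Cmul Ci (phase nu l).
Proof.
  intro Hnu. unfold phase.
  replace (nu * (l + PI / (2 * nu))) with (nu * l + PI / 2) by (field; lra).
  rewrite cos_plus, sin_plus, cos_PI2, sin_PI2.
  apply Ceq; unfold Cmul, Ci; simpl; ring.
Qed.

Lemma exp_nat l k : exp (2 * INR k * l) = exp (2 * l) ^ k.
Proof.
  induction k as [|k IH].
  - simpl. rewrite <- exp_0. f_equal; ring.
  - rewrite S_INR. simpl. rewrite <- IH, <- exp_plus. f_equal; ring.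
Qed.

Lemma bessel_term_factor nu l k :
  Cmul (RtoC ((-1) ^ k / INR (fact k)))
    (Cmul (rGamma (Cadd (mkC 0 nu) (RtoC (INR k + 1))))
       (Cpow_pos (2 * exp l / 2) (Cadd (RtoC (2 * INR k)) (mkC 0 nu))))
  = Cmul (phase nu l) (bessel_term nu l k).
Proof.
  replace (Cadd (mkC 0 nu) (RtoC (INR k + 1))) with (mkC (INR k + 1) nu)
    by (apply Ceq; unfold Cadd, RtoC; simpl; ring).
  replace (2 * exp l / 2) with (exp l) by field.
  unfold bessel_term, phase, Cpow_pos, Cexp, Cmul, Cadd, RtoC. rewrite ln_exp, <- exp_nat.
  cbn [Re Im].
  replace ((2 * INR k + 0) * l - (0 + nu) * 0) with (2 * INR k * l) by ring.
  replace ((2 * INR k + 0) * 0 + (0 + nu) * l) with (nu * l) by ring.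
  destruct (rGamma (mkC (INR k + 1) nu)) as [p q].
  apply Ceq; cbn [Re Im]; ring.
Qed.

Lemma Cpartial_factor E a b n : (forall k, b k = Cmul E (a k)) ->
  Cpartial b n = Cmul E (Cpartial a n).
Proof.
  intro H; induction n as [|n IH]; simpl; rewrite H; auto.
  rewrite IH. apply Ceq; unfold Cadd, Cmul; simpl; ring.
Qed.

Lemma sign_fact_sq_le1 k : ((-1) ^ k / INR (fact k)) * ((-1) ^ k / INR (fact k)) <= 1.
Proof.
  assert (1 <= INR (fact k)) by (rewrite <- INR_1; apply le_INR; apply lt_O_fact).
  replace (((-1) ^ k / INR (fact k)) * ((-1) ^ k / INR (fact k)))
    with (((-1) ^ k * (-1) ^ k) * / (INR (fact k) * INR (fact k))) by (field; lra).
  rewrite <- Rpow_mult_distr. replace (-1 * -1) with 1 by ring. rewrite pow1, Rmult_1_l.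
  rewrite <- Rinv_1. apply Rinv_le_contravar; nra.
Qed.

Lemma bessel_term_bound nu l G k :
  (exists Rk, Ccv (gauss (mkC (INR k + 1) nu)) Rk /\ Nm Rk <= Nm G) ->
  Nm (bessel_term nu l k) <= (sqrt (Nm G) * exp (2 * l) ^ k) * (sqrt (Nm G) * exp (2 * l) ^ k).
Proof.
  intros [Rk [HRk Hle]].
  unfold bessel_term. rewrite rGamma_gauss, (Clim_eq _ _ HRk), Nm_mul.
  set (q := exp (2 * l)). set (c := (-1) ^ k / INR (fact k)).
  assert (Hq : 0 <= q ^ k) by (apply pow_le; unfold q; pose proof (exp_pos (2 * l)); lra).
  pose proof (sign_fact_sq_le1 k) as Hc. fold c in Hc.
  assert (HM : sqrt (Nm G) * sqrt (Nm G) = Nm G) by (apply sqrt_sqrt, Nm_ge0).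
  set (M := sqrt (Nm G)) in *.
  replace (M * q ^ k * (M * q ^ k)) with ((q ^ k * q ^ k) * Nm G) by (rewrite <- HM; ring).
  unfold Nm at 1; cbn [Re Im RtoC].
  pose proof (Nm_ge0 Rk).
  replace ((c * q ^ k * (c * q ^ k) + 0 * 0) * Nm Rk)
    with ((q ^ k * q ^ k) * ((c * c) * Nm Rk)) by ring.
  apply Rmult_le_compat_l; [nra|]. nra.
Qed.

Lemma bessel_small_argument nu l G : 0 < Nm G -> Ccv (gauss (mkC 1 nu)) G ->
  (forall k, exists Rk, Ccv (gauss (mkC (INR k + 1) nu)) Rk /\ Nm Rk <= Nm G) ->
  exp (2 * l) <= 1 / 9 ->
  exists S, BesselJ (mkC 0 nu) (2 * exp l) = Cmul (phase nu l) S /\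
    Rabs (Re S - Re G) <= sqrt (Nm G) / 8 /\ Rabs (Im S - Im G) <= sqrt (Nm G) / 8.
Proof.
  intros HG HcG Hall Hl.
  set (M := sqrt (Nm G)). set (q := exp (2 * l)) in *.
  assert (Hq : 0 <= q < 1) by (pose proof (exp_pos (2 * l)) as Hp; fold q in Hp; lra).
  assert (HM : 0 <= M) by apply sqrt_pos.
  destruct (geometric_series_near_first_term (bessel_term nu l) M q HM Hq) as [S [HS [B1 B2]]].
  { intro k. apply bessel_term_bound, Hall. }
  assert (HT0 : bessel_term nu l 0 = G).
  { unfold bessel_term. rewrite rGamma_gauss. simpl INR. rewrite Rplus_0_l, (Clim_eq _ _ HcG).
    apply Ceq; unfold Cmul, RtoC; cbn [Re Im pow]; field. }
  rewrite HT0 in B1, B2.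
  assert (Hq8 : M * q / (1 - q) <= M / 8).
  { unfold Rdiv. rewrite Rmult_assoc. apply Rmult_le_compat_l; auto.
    apply (Rmult_le_reg_r (1 - q)); [lra|]. field_simplify; lra. }
  exists S. split; [|lra].
  unfold BesselJ, Cseries. apply Clim_eq.
  apply (Ccv_ext (fun n => Cmul (phase nu l) (Cpartial (bessel_term nu l) n))).
  { intro n. symmetry. apply Cpartial_factor. intro k. apply bessel_term_factor. }
  apply (Ccv_mul (fun _ => phase nu l)); [apply Ccv_const | exact HS].
Qed.

Lemma Rabs_le_bounds x a : Rabs x <= a -> - a <= x <= a.
Proof. unfold Rabs; destruct (Rcase_abs x); intros; lra. Qed.

Lemma near_center_pairing_pos G S1 S2 : 0 < Nm G ->
  Rabs (Re S1 - Re G) <= sqrt (Nm G) / 8 -> Rabs (Im S1 - Im G) <= sqrt (Nm G) / 8 ->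
  Rabs (Re S2 - Re G) <= sqrt (Nm G) / 8 -> Rabs (Im S2 - Im G) <= sqrt (Nm G) / 8 ->
  0 < Re S1 * Re S2 + Im S1 * Im S2.
Proof.
  intros HG H1 H2 H3 H4.
  set (M := sqrt (Nm G)) in *.
  assert (HM2 : M * M = Nm G) by (unfold M; apply sqrt_sqrt; lra).
  assert (HM : 0 < M) by (unfold M; apply sqrt_lt_R0; auto).
  unfold Nm in HM2, HG.
  assert (Gx : Rabs (Re G) <= M) by (apply abs_of_sq; nra).
  assert (Gy : Rabs (Im G) <= M) by (apply abs_of_sq; nra).
  set (gx := Re G) in *. set (gy := Im G) in *.
  set (d1 := Re S1 - gx) in *. set (d2 := Re S2 - gx) in *.
  set (f1 := Im S1 - gy) in *. set (f2 := Im S2 - gy) in *.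
  replace (Re S1 * Re S2 + Im S1 * Im S2) with
    (M * M + gx * (d1 + d2) + gy * (f1 + f2) + d1 * d2 + f1 * f2)
    by (unfold d1, d2, f1, f2; rewrite HM2; ring).
  assert (B1 : Rabs (gx * (d1 + d2)) <= M * (M / 4)).
  { rewrite Rabs_mult. apply Rmult_le_compat; try apply Rabs_pos; auto.
    pose proof (Rabs_triang d1 d2). lra. }
  assert (B2 : Rabs (gy * (f1 + f2)) <= M * (M / 4)).
  { rewrite Rabs_mult. apply Rmult_le_compat; try apply Rabs_pos; auto.
    pose proof (Rabs_triang f1 f2). lra. }
  assert (B3 : Rabs (d1 * d2) <= (M / 8) * (M / 8)).
  { rewrite Rabs_mult. apply Rmult_le_compat; try apply Rabs_pos; auto. }
  assert (B4 : Rabs (f1 * f2) <= (M / 8) * (M / 8)).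
  { rewrite Rabs_mult. apply Rmult_le_compat; try apply Rabs_pos; auto. }
  apply Rabs_le_bounds in B1, B2, B3, B4.
  nra.
Qed.

Lemma bessel_quarter_turn nu : 0 < nu -> exists y1 y2, 0 < y1 /\ 0 < y2 /\
  0 < Im (Cmul (Cconj (BesselJ (mkC 0 nu) y1)) (BesselJ (mkC 0 nu) y2)).
Proof.
  intro Hnu.
  destruct (gauss_bounded_on_shifts nu Hnu) as [G [HG [HcG Hall]]].
  set (l1 := -2 - 2 / nu).
  assert (Hl1 : l1 <= -2).
  { unfold l1. assert (0 < 2 / nu) by (apply Rdiv_lt_0_compat; lra). lra. }
  assert (Hl2 : l1 + PI / (2 * nu) <= -2).
  { unfold l1. pose proof PI_4.
    replace (-2 - 2 / nu + PI / (2 * nu)) with (-2 + (PI - 4) / (2 * nu)) by (field; lra).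
    assert (0 < / (2 * nu)) by (apply Rinv_0_lt_compat; lra).
    unfold Rdiv. nra. }
  destruct (bessel_small_argument nu l1 G HG HcG Hall (exp_small _ Hl1)) as [S1 [HJ1 [B1 B2]]].
  destruct (bessel_small_argument nu _ G HG HcG Hall (exp_small _ Hl2)) as [S2 [HJ2 [B3 B4]]].
  exists (2 * exp l1), (2 * exp (l1 + PI / (2 * nu))).
  split; [pose proof (exp_pos l1); lra|]. split; [pose proof (exp_pos (l1 + PI / (2 * nu))); lra|].
  rewrite HJ1, HJ2, phase_quarter_turn by exact Hnu.
  pose proof (Nm_phase nu l1) as HE. unfold Nm in HE.
  replace (Im (Cmul (Cconj (Cmul (phase nu l1) S1)) (Cmul (Cmul Ci (phase nu l1)) S2)))
    with ((Re (phase nu l1) * Re (phase nu l1) + Im (phase nu l1) * Im (phase nu l1))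
          * (Re S1 * Re S2 + Im S1 * Im S2))
    by (unfold Cmul, Cconj, Ci; simpl; ring).
  rewrite HE, Rmult_1_l. apply (near_center_pairing_pos G); auto.
Qed.

(** ** From PC invariance to the corollary *)

(** If [a w = b conj w] holds for [w1] and [w2] with [conj w1 * w2] not real,
    then [a = b = 0]: multiplying the first relation by the conjugate of the
    second gives [|a|^2 w1 conj w2 = |b|^2 conj w1 w2], whose imaginary part
    reads [(|a|^2 + |b|^2) Im (conj w1 w2) = 0]. *)
Lemma conj_relation_vanishes a b w1 w2 :
  Cmul a w1 = Cmul b (Cconj w1) -> Cmul a w2 = Cmul b (Cconj w2) ->
  Im (Cmul (Cconj w1) w2) <> 0 -> a = C0 /\ b = C0.
Proof.
  intros H1 H2 Hw.
  assert (K : Im (Cmul (Cmul a w1) (Cconj (Cmul a w2)))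
              = Im (Cmul (Cmul b (Cconj w1)) (Cconj (Cmul b (Cconj w2)))))
    by (rewrite H1, H2; reflexivity).
  assert (Hsum : (Nm a + Nm b) * Im (Cmul (Cconj w1) w2) = 0).
  { destruct a, b, w1, w2; unfold Nm, Cmul, Cconj in *; simpl in *.
    match type of K with ?l = ?r => transitivity (r - l); [ring | lra] end. }
  apply Rmult_integral in Hsum as [Hs | Hs]; [| contradiction].
  pose proof (Nm_ge0 a); pose proof (Nm_ge0 b).
  split; apply Nm_eq0; lra.
Qed.

Lemma mode_amplitude_pos omega nu : 0 < omega -> 0 < nu ->
  0 < sqrt (PI / omega) * / sqrt (2 * sinh (PI * nu)) * Rpower (2 * PI) (- (3 / 2))
      * Rpower (- omega * -1) (3 / 2).
Proof.
  intros Ho Hnu. unfold Rpower. pose proof PI_RGT_0.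
  assert (0 < sinh (PI * nu)) by (rewrite <- sinh_0; apply sinh_lt; nra).
  repeat apply Rmult_lt_0_compat; try apply exp_pos.
  - apply sqrt_lt_R0. apply Rdiv_lt_0_compat; lra.
  - apply Rinv_0_lt_compat. apply sqrt_lt_R0. lra.
Qed.

Lemma Cexp_i0 r : r = 0 -> Cexp (Cmul Ci (RtoC r)) = mkC 1 0.
Proof.
  intros ->. unfold Cexp, Cmul, Ci, RtoC; simpl.
  replace (0 * 0 - 1 * 0) with 0 by ring. replace (0 * 0 + 1 * 0) with 0 by ring.
  rewrite exp_0, cos_0, sin_0. apply Ceq; simpl; ring.
Qed.

Lemma pc_invariance_at_origin omega nu c1 c2 eta y : 0 < omega -> 0 < nu -> 0 < y ->
  PCop (f_mode omega nu c1 c2 (y, 0, 0)) (-1) (0, 0, 0)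
  = Cmul eta (f_mode omega nu c1 c2 (y, 0, 0) (-1) (0, 0, 0)) ->
  Cmul (Csub (Cconj c2) (Cmul eta c1)) (BesselJ (mkC 0 nu) y)
  = Cmul (Csub (Cmul eta c2) (Cconj c1)) (Cconj (BesselJ (mkC 0 nu) y)).
Proof.
  intros Ho Hnu Hy H.
  unfold PCop, Pop, Cop, f_mode, fconj, u_mode in H.
  assert (N1 : - vnorm (y, 0, 0) * -1 = y).
  { unfold vnorm, vdot. replace (y * y + 0 * 0 + 0 * 0) with (y * y) by ring.
    rewrite sqrt_square by lra. ring. }
  assert (N2 : - vnorm (vopp (y, 0, 0)) * -1 = y).
  { unfold vnorm, vdot, vopp. replace (- y * - y + - 0 * - 0 + - 0 * - 0) with (y * y) by ring.
    rewrite sqrt_square by lra. ring. }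
  rewrite N1, N2, !Cexp_i0 in H by (unfold vdot, vopp; ring).
  pose proof (mode_amplitude_pos omega nu Ho Hnu) as HA.
  set (A := _ * Rpower (- omega * -1) (3 / 2)) in H, HA.
  set (J := BesselJ (mkC 0 nu) y) in *.
  destruct J as [jr ji], c1 as [p1 q1], c2 as [p2 q2], eta as [er ei].
  unfold Csub, Cmul, Cconj, Cadd, RtoC, Copp in H |- *. cbn [Re Im] in H |- *.
  injection H; intros E2 E1.
  apply Ceq; cbn [Re Im]; apply (Rmult_eq_reg_l A); lra.
Qed.

Lemma Csub_eq0 z w : Csub z w = C0 -> z = w.
Proof.
  unfold Csub, Cadd, Copp, C0, RtoC; intro H; injection H; intros.
  apply Ceq; lra.
Qed.

Lemma pc_invariance_relations omega nu c1 c2 eta : 0 < omega -> 0 < nu ->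
  (forall (p : vec3) (t : R) (x : vec3), t < 0 ->
     PCop (f_mode omega nu c1 c2 p) t x = Cmul eta (f_mode omega nu c1 c2 p t x)) ->
  Cconj c2 = Cmul eta c1 /\ Cmul eta c2 = Cconj c1.
Proof.
  intros Ho Hnu Hinv.
  destruct (bessel_quarter_turn nu Hnu) as [y1 [y2 [Hy1 [Hy2 Hw]]]].
  pose proof (pc_invariance_at_origin omega nu c1 c2 eta y1 Ho Hnu Hy1
                (Hinv (y1, 0, 0) (-1) (0, 0, 0) ltac:(lra))) as R1.
  pose proof (pc_invariance_at_origin omega nu c1 c2 eta y2 Ho Hnu Hy2
                (Hinv (y2, 0, 0) (-1) (0, 0, 0) ltac:(lra))) as R2.
  destruct (conj_relation_vanishes _ _ _ _ R1 R2 ltac:(lra)) as [Ha Hb].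
  split; apply Csub_eq0; assumption.
Qed.

(** The relations [conj c2 = eta c1], [eta c2 = conj c1] with [c <> 0] give
    [|c2|^2 = |eta|^2 |c1|^2] and [|eta|^2 |c2|^2 = |c1|^2], hence
    [|eta| = 1] and [|c1| = |c2|], i.e. [<c.c> = 0]. *)
Lemma unimodular_and_null c1 c2 eta : ~ (c1 = C0 /\ c2 = C0) ->
  Cconj c2 = Cmul eta c1 -> Cmul eta c2 = Cconj c1 ->
  Cmod eta = 1 /\ cform c1 c2 c1 c2 = C0.
Proof.
  intros hc E1 E2.
  assert (N1 : Nm c2 = Nm eta * Nm c1) by (rewrite <- Nm_conj, E1, Nm_mul; auto).
  assert (N2 : Nm eta * Nm c2 = Nm c1) by (rewrite <- Nm_mul, E2, Nm_conj; auto).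
  assert (Hc1 : 0 < Nm c1).
  { destruct (Nm_ge0 c1) as [|H0]; auto. exfalso. apply hc.
    symmetry in H0. split; apply Nm_eq0; auto. rewrite N1, H0; ring. }
  assert (Heta : Nm eta = 1).
  { pose proof (Nm_ge0 eta). rewrite N1 in N2.
    assert (H0 : (Nm eta * Nm eta - 1) * Nm c1 = 0) by lra.
    apply Rmult_integral in H0 as [H0 | H0]; nra. }
  split.
  - unfold Cmod. fold (Nm eta). rewrite Heta. apply sqrt_1.
  - rewrite Heta, Rmult_1_l in N1. unfold Nm in N1.
    apply Ceq; unfold cform, Csub, Cadd, Copp, Cmul, Cconj, C0, RtoC; simpl; lra.
Qed.

Lemma nu_of_pos omega m lambda : 0 < omega -> 0 < lambda -> lambda < m / omega ->
  0 < nu_of omega m lambda.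
Proof. intros Ho Hl Hm. unfold nu_of. apply sqrt_lt_R0. nra. Qed.

Theorem corollary2 (omega m lambda : R) (homega : 0 < omega) (hlambda : 0 < lambda)
  (hmu : lambda < m / omega) (c1 c2 : Cplx) (hc : ~ (c1 = C0 /\ c2 = C0)) (eta : Cplx)
  (Hinv : forall (p : vec3) (t : R) (x : vec3), t < 0 ->
     PCop (f_mode omega (nu_of omega m lambda) c1 c2 p) t x
     = Cmul eta (f_mode omega (nu_of omega m lambda) c1 c2 p t x)) :
  Cmod eta = 1 /\ cform c1 c2 c1 c2 = C0.
Proof.
  pose proof (nu_of_pos omega m lambda homega hlambda hmu) as Hnu.
  destruct (pc_invariance_relations omega _ c1 c2 eta homega Hnu Hinv) as [E1 E2].
  exact (unimodular_and_null c1 c2 eta hc E1 E2).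
Qed.
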